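(* Let $R>0$ and let $f=(f^1,f^2,f^3):\mathbb R\to\mathbb R^3$ be any circular tractrix with parameter $R$ (in any of the three cases $R>1$, $R=1$, $0<R<1$, with admissible constants $c_1,c_2$). Then $|f'(t)|=|\xi_2(t)|$ for all $t\in\mathbb R$, and for every $t$ with $\xi_2(t)\neq 0$, $$f(t)+\frac{1}{\xi_2(t)}f'(t)=\Big(R\cos\tfrac{t}{R},\,R\sin\tfrac{t}{R},\,0\Big).$$ In particular, for such $t$ the point $f(t)$ is at distance $1$ from the point $(R\cos\frac tR,R\sin\frac tR,0)$ of the circle $C$ of radius $R$ centered at the origin in the plane $x^3=0$, and the segment joining them is tangent to the curve at $f(t)$.
   Context: Coordinates $(x^1,x^2,x^3)$ on $\mathbb R^3$. Fix $R>0$. A circular tractrix with parameter $R$ is the curve $f:\mathbb R\to\mathbb R^3$, $$f(t)=\Big(\xi_1\cos\tfrac tR+\xi_2\sin\tfrac tR,\ -\xi_2\cos\tfrac tR+\xi_1\sin\tfrac tR,\ \xi_3\Big),$$ where $\xi_i=\xi_i(t)$ are given as follows. Case $R>1$: $\lambda=\frac{\sqrt{R^2-1}}{R}$, $\xi_1=\frac{(R-\frac1R)\cosh\lambda t}{\frac{c_1}{R}+\cosh\lambda t}$, $\xi_2=\frac{\lambda\sinh\lambda t}{\frac{c_1}{R}+\cosh\lambda t}$, $\xi_3=\frac{\lambda c_2}{\frac{c_1}{R}+\cosh\lambda t}$, with real constants $c_1^2+c_2^2=1$. Case $R=1$: $\xi_1=\frac{2}{c_1+t^2}$, $\xi_2=\frac{2t}{c_1+t^2}$,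 $\xi_3=\frac{c_2}{c_1+t^2}$, with real constants satisfying $4(c_1-1)=c_2^2$. Case $0<R<1$: $\lambda=\frac{\sqrt{1-R^2}}{R}$, $\xi_1=\frac{(R-\frac1R)\cos\lambda t}{\frac{c_1}{R}+\cos\lambda t}$, $\xi_2=-\frac{\lambda\sin\lambda t}{\frac{c_1}{R}+\cos\lambda t}$, $\xi_3=\frac{\lambda c_2}{\frac{c_1}{R}+\cos\lambda t}$, with real constants $c_1^2-c_2^2=1$. *)

From Stdlib Require Import Reals.
From Coquelicot Require Import Coquelicot.
Open Scope R_scope.

Definition admissible (r c1 c2 : R) : Prop :=
  (1 < r /\ c1 ^ 2 + c2 ^ 2 = 1) \/
  (r = 1 /\ 4 * (c1 - 1) = c2 ^ 2) \/
  (0 < r < 1 /\ c1 ^ 2 - c2 ^ 2 = 1).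

Definition lam (r : R) : R :=
  if Rlt_dec 1 r then sqrt (r ^ 2 - 1) / r else sqrt (1 - r ^ 2) / r.

Definition xi1 (r c1 c2 t : R) : R :=
  if Rlt_dec 1 r then
    (r - 1 / r) * cosh (lam r * t) / (c1 / r + cosh (lam r * t))
  else if Req_EM_T r 1 then 2 / (c1 + t ^ 2)
  else (r - 1 / r) * cos (lam r * t) / (c1 / r + cos (lam r * t)).

Definition xi2 (r c1 c2 t : R) : R :=
  if Rlt_dec 1 r then
    lam r * sinh (lam r * t) / (c1 / r + cosh (lam r * t))
  else if Req_EM_T r 1 then 2 * t / (c1 + t ^ 2)
  else - (lam r * sin (lam r * t) / (c1 / r + cos (lam r * t))).

Definition xi3 (r c1 c2 t : R) : R :=
  if Rlt_dec 1 r then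
    lam r * c2 / (c1 / r + cosh (lam r * t))
  else if Req_EM_T r 1 then c2 / (c1 + t ^ 2)
  else lam r * c2 / (c1 / r + cos (lam r * t)).

Definition tr1 (r c1 c2 t : R) : R :=
  xi1 r c1 c2 t * cos (t / r) + xi2 r c1 c2 t * sin (t / r).
Definition tr2 (r c1 c2 t : R) : R :=
  - xi2 r c1 c2 t * cos (t / r) + xi1 r c1 c2 t * sin (t / r).
Definition tr3 (r c1 c2 t : R) : R := xi3 r c1 c2 t.

From Stdlib Require Import Reals Lra.
From Coquelicot Require Import Coquelicot.
Open Scope R_scope.

(* In all three regimes the profile (xi1, xi2, xi3) solves
     xi1' = xi2 (R - xi1) - xi2 / R,   xi2' = xi1 / R - xi2^2,   xi3' = - xi2 xi3
   and lies on the unit sphere (R - xi1)^2 + xi2^2 + xi3^2 = 1.  Rotating the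
   profile by the angle t/R, these equations say exactly that
   f' = xi2 (P - f) with P = (R cos(t/R), R sin(t/R), 0), while the rotation
   preserves |f - P| = 1.  Hence |f'| = |xi2| and f + f'/xi2 = P. *)

Lemma tangent_unit_segment (f1 f2 f3 p1 p2 p3 k d1 d2 d3 : R) :
  d1 = k * (p1 - f1) -> d2 = k * (p2 - f2) -> d3 = k * (p3 - f3) ->
  (f1 - p1) ^ 2 + (f2 - p2) ^ 2 + (f3 - p3) ^ 2 = 1 ->
  sqrt (d1 ^ 2 + d2 ^ 2 + d3 ^ 2) = Rabs k /\
  (k <> 0 ->
     (f1 + / k * d1 = p1 /\ f2 + / k * d2 = p2 /\ f3 + / k * d3 = p3) /\
     sqrt ((f1 - p1) ^ 2 + (f2 - p2) ^ 2 + (f3 - p3) ^ 2) = 1).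
Proof.
intros -> -> -> hdist; split.
- replace ((k * (p1 - f1)) ^ 2 + (k * (p2 - f2)) ^ 2 + (k * (p3 - f3)) ^ 2)
    with (Rsqr k * ((f1 - p1) ^ 2 + (f2 - p2) ^ 2 + (f3 - p3) ^ 2))
    by (unfold Rsqr; ring).
  rewrite hdist, Rmult_1_r; apply sqrt_Rsqr_abs.
- intros hk; split.
  + repeat split; field; exact hk.
  + rewrite hdist; exact sqrt_1.
Qed.

Definition tractrix_system (r : R) (x1 x2 x3 : R -> R) (t : R) : Prop :=
  is_derive x1 t (x2 t * (r - x1 t) - x2 t / r) /\
  is_derive x2 t (x1 t / r - x2 t ^ 2) /\
  is_derive x3 t (- x2 t * x3 t) /\
  (r - x1 t) ^ 2 + x2 t ^ 2 + x3 t ^ 2 = 1.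

Lemma tractrix_system_ext (r : R) (x1 x2 x3 y1 y2 y3 : R -> R) (t : R) :
  (forall u, y1 u = x1 u) -> (forall u, y2 u = x2 u) -> (forall u, y3 u = x3 u) ->
  tractrix_system r y1 y2 y3 t -> tractrix_system r x1 x2 x3 t.
Proof.
intros e1 e2 e3 [d1 [d2 [d3 hsph]]]; unfold tractrix_system.
rewrite <- !e1, <- !e2, <- !e3.
exact (conj (is_derive_ext _ _ _ _ e1 d1) (conj (is_derive_ext _ _ _ _ e2 d2)
         (conj (is_derive_ext _ _ _ _ e3 d3) hsph))).
Qed.

Section RotatingFrame.

Variables (r : R) (x1 x2 x3 : R -> R).
Hypothesis r_neq0 : r <> 0.

Definition rotated1 (u : R) : R := x1 u * cos (u / r) + x2 u * sin (u / r).
Definition rotated2 (u : R) : R := - x2 u * cos (u / r) + x1 u * sin (u / r).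

Section Derivatives.

Variable t : R.
Hypothesis dx1 : is_derive x1 t (x2 t * (r - x1 t) - x2 t / r).
Hypothesis dx2 : is_derive x2 t (x1 t / r - x2 t ^ 2).

Lemma is_derive_rotated1 :
  is_derive rotated1 t (x2 t * (r * cos (t / r) - rotated1 t)).
Proof.
unfold rotated1; auto_derive.
- repeat split; eexists; eassumption.
- change (fun x => x1 x) with x1; change (fun x => x2 x) with x2.
  rewrite (is_derive_unique _ _ _ dx1), (is_derive_unique _ _ _ dx2).
  change (t * / r) with (t / r); field; exact r_neq0.
Qed.

Lemma is_derive_rotated2 :
  is_derive rotated2 t (x2 t * (r * sin (t / r) - rotated2 t)).
Proof.
unfold rotated2; auto_derive.
- repeat split; eexists; eassumption.
- change (fun x => x1 x) with x1; change (fun x => x2 x) with x2.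
  rewrite (is_derive_unique _ _ _ dx1), (is_derive_unique _ _ _ dx2).
  change (t * / r) with (t / r); field; exact r_neq0.
Qed.

End Derivatives.

Lemma rotated_dist_sq (t : R) :
  (rotated1 t - r * cos (t / r)) ^ 2 + (rotated2 t - r * sin (t / r)) ^ 2
  + (x3 t - 0) ^ 2 = (r - x1 t) ^ 2 + x2 t ^ 2 + x3 t ^ 2.
Proof.
unfold rotated1, rotated2.
pose proof (sin2_cos2 (t / r)) as hsc; unfold Rsqr in hsc.
transitivity (((r - x1 t) ^ 2 + x2 t ^ 2) * (sin (t / r) ^ 2 + cos (t / r) ^ 2)
              + x3 t ^ 2); [ring|].
simpl; rewrite !Rmult_1_r, hsc; ring.
Qed.

Lemma tractrix_system_tangent (t : R) :
  tractrix_system r x1 x2 x3 t ->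
  ex_derive rotated1 t /\ ex_derive rotated2 t /\ ex_derive x3 t /\
  sqrt (Derive rotated1 t ^ 2 + Derive rotated2 t ^ 2 + Derive x3 t ^ 2)
    = Rabs (x2 t) /\
  (x2 t <> 0 ->
     (rotated1 t + / x2 t * Derive rotated1 t = r * cos (t / r) /\
      rotated2 t + / x2 t * Derive rotated2 t = r * sin (t / r) /\
      x3 t + / x2 t * Derive x3 t = 0) /\
     sqrt ((rotated1 t - r * cos (t / r)) ^ 2
           + (rotated2 t - r * sin (t / r)) ^ 2 + (x3 t - 0) ^ 2) = 1).
Proof.
intros [dx1 [dx2 [dx3 hsph]]].
pose proof (is_derive_rotated1 t dx1 dx2) as df1.
pose proof (is_derive_rotated2 t dx1 dx2) as df2.
split; [eexists; exact df1|]; split; [eexists; exact df2|].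
split; [eexists; exact dx3|].
rewrite (is_derive_unique _ _ _ df1), (is_derive_unique _ _ _ df2),
  (is_derive_unique _ _ _ dx3).
apply tangent_unit_segment; [reflexivity | reflexivity | ring |].
rewrite rotated_dist_sq; exact hsph.
Qed.

End RotatingFrame.

(* The regimes [R > 1] and [0 < R < 1] at once: [e = 1] for (cosh, sinh),
   [e = -1] for (cos, -sin). *)
Lemma trig_tractrix_system (r c1 c2 e L : R) (C S : R -> R) (t : R) :
  e = 1 \/ e = -1 -> r <> 0 ->
  e * L ^ 2 * r ^ 2 = r ^ 2 - 1 -> c1 ^ 2 + e * c2 ^ 2 = 1 ->
  is_derive C t (e * L * S t) -> is_derive S t (L * C t) ->
  C t ^ 2 - e * S t ^ 2 = 1 -> c1 + C t * r <> 0 ->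
  tractrix_system r (fun u => (r - 1 / r) * C u / (c1 / r + C u))
    (fun u => e * L * S u / (c1 / r + C u)) (fun u => L * c2 / (c1 / r + C u)) t.
Proof.
intros he hr hL hc dC dS hCS hD.
assert (hD' : c1 / r + C t <> 0).
{ replace (c1 / r + C t) with ((c1 + C t * r) / r) by (field; exact hr).
  unfold Rdiv; apply Rmult_integral_contrapositive_currified;
    [exact hD | apply Rinv_neq_0_compat, hr]. }
destruct he as [-> | ->]; refine (conj _ (conj _ (conj _ _))).
all: try (auto_derive; [repeat split; auto; eexists; eassumption|]).
all: change (fun x => C x) with C; change (fun x => S x) with S.
all: rewrite ?(is_derive_unique _ _ _ dC), ?(is_derive_unique _ _ _ dS).
all: field_simplify_eq; [|auto].
all: try nra.
(* The [xi2'] identity uses [hL] only after multiplication by [C^2 r + C c1]. *)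
all: pose proof (f_equal (fun z => z * (C t ^ 2 * r + C t * c1)) hL); nra.
Qed.

Lemma rational_tractrix_system (c1 c2 t : R) :
  4 * (c1 - 1) = c2 ^ 2 ->
  tractrix_system 1 (fun u => 2 / (c1 + u ^ 2)) (fun u => 2 * u / (c1 + u ^ 2))
    (fun u => c2 / (c1 + u ^ 2)) t.
Proof.
intros hc.
assert (hD : c1 + t ^ 2 <> 0) by nra.
refine (conj _ (conj _ (conj _ _))).
1-3: auto_derive; [exact hD | field; exact hD].
field_simplify_eq; [nra | exact hD].
Qed.

Lemma cosh_sq_sub_sinh_sq (x : R) : cosh x ^ 2 - sinh x ^ 2 = 1.
Proof.
unfold cosh, sinh.
assert (h : exp x * exp (- x) = 1) by (rewrite <- exp_plus, Rplus_opp_r; exact exp_0).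
nra.
Qed.

Lemma one_le_cosh (x : R) : 1 <= cosh x.
Proof.
assert (hpos : 0 < cosh x) by (unfold cosh; pose proof (exp_pos x); pose proof (exp_pos (- x)); lra).
pose proof (cosh_sq_sub_sinh_sq x); nra.
Qed.

Lemma lam_sq_gt1 (r : R) : 1 < r -> lam r ^ 2 * r ^ 2 = r ^ 2 - 1.
Proof.
intros hr; unfold lam; destruct (Rlt_dec 1 r) as [_|]; [|lra].
replace ((sqrt (r ^ 2 - 1) / r) ^ 2 * r ^ 2) with (sqrt (r ^ 2 - 1) ^ 2) by (field; lra).
apply pow2_sqrt; nra.
Qed.

Lemma lam_sq_lt1 (r : R) : 0 < r < 1 -> lam r ^ 2 * r ^ 2 = 1 - r ^ 2.
Proof.
intros hr; unfold lam; destruct (Rlt_dec 1 r) as [|_]; [lra|].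
replace ((sqrt (1 - r ^ 2) / r) ^ 2 * r ^ 2) with (sqrt (1 - r ^ 2) ^ 2) by (field; lra).
apply pow2_sqrt; nra.
Qed.

Ltac unfold_xi_regime r :=
  intros ?; unfold xi1, xi2, xi3;
  destruct (Rlt_dec 1 r); try destruct (Req_EM_T r 1); try lra; ring.

Lemma xi_tractrix_system_gt1 (r c1 c2 t : R) :
  1 < r -> c1 ^ 2 + c2 ^ 2 = 1 ->
  tractrix_system r (xi1 r c1 c2) (xi2 r c1 c2) (xi3 r c1 c2) t.
Proof.
intros hr hc.
assert (hD : c1 + cosh (lam r * t) * r <> 0).
{ pose proof (one_le_cosh (lam r * t)).
  assert (-1 <= c1) by nra.
  nra. }
eapply tractrix_system_ext; cycle 3.
- apply (trig_tractrix_system r c1 c2 1 (lam r)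
           (fun u => cosh (lam r * u)) (fun u => sinh (lam r * u))); try lra.
  + pose proof (lam_sq_gt1 r hr); lra.
  + unfold cosh, sinh; auto_derive; [exact I | field].
  + unfold cosh, sinh; auto_derive; [exact I | field].
  + pose proof (cosh_sq_sub_sinh_sq (lam r * t)); lra.
- all: unfold_xi_regime r.
Qed.

Lemma xi_tractrix_system_eq1 (c1 c2 t : R) :
  4 * (c1 - 1) = c2 ^ 2 ->
  tractrix_system 1 (xi1 1 c1 c2) (xi2 1 c1 c2) (xi3 1 c1 c2) t.
Proof.
intros hc; eapply tractrix_system_ext; cycle 3.
- exact (rational_tractrix_system c1 c2 t hc).
- all: unfold_xi_regime 1.
Qed.

Lemma xi_tractrix_system_lt1 (r c1 c2 t : R) :
  0 < r < 1 -> c1 ^ 2 - c2 ^ 2 = 1 ->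
  tractrix_system r (xi1 r c1 c2) (xi2 r c1 c2) (xi3 r c1 c2) t.
Proof.
intros hr hc.
assert (hD : c1 + cos (lam r * t) * r <> 0).
{ pose proof (COS_bound (lam r * t)).
  assert (hc1 : 1 <= c1 \/ c1 <= -1) by (destruct (Rle_dec 0 c1); [left | right]; nra).
  destruct hc1; nra. }
eapply tractrix_system_ext; cycle 3.
- apply (trig_tractrix_system r c1 c2 (-1) (lam r)
           (fun u => cos (lam r * u)) (fun u => sin (lam r * u))); try lra.
  + pose proof (lam_sq_lt1 r hr); lra.
  + auto_derive; [exact I | ring].
  + auto_derive; [exact I | ring].
  + pose proof (sin2_cos2 (lam r * t)) as hsc; unfold Rsqr in hsc; simpl; lra.
- all: unfold_xi_regime r.
Qed.

Theorem mainTheorem1 (r c1 c2 : R) (hr : 0 < r) (hadm : admissible r c1 c2) :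
  forall t : R,
    ex_derive (tr1 r c1 c2) t /\ ex_derive (tr2 r c1 c2) t /\
    ex_derive (tr3 r c1 c2) t /\
    sqrt (Derive (tr1 r c1 c2) t ^ 2 + Derive (tr2 r c1 c2) t ^ 2
          + Derive (tr3 r c1 c2) t ^ 2) = Rabs (xi2 r c1 c2 t) /\
    (xi2 r c1 c2 t <> 0 ->
       (tr1 r c1 c2 t + / xi2 r c1 c2 t * Derive (tr1 r c1 c2) t = r * cos (t / r) /\
        tr2 r c1 c2 t + / xi2 r c1 c2 t * Derive (tr2 r c1 c2) t = r * sin (t / r) /\
        tr3 r c1 c2 t + / xi2 r c1 c2 t * Derive (tr3 r c1 c2) t = 0) /\
       sqrt ((tr1 r c1 c2 t - r * cos (t / r)) ^ 2
             + (tr2 r c1 c2 t - r * sin (t / r)) ^ 2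
             + (tr3 r c1 c2 t - 0) ^ 2) = 1).
Proof.
intros t.
apply (tractrix_system_tangent r (xi1 r c1 c2) (xi2 r c1 c2) (xi3 r c1 c2));
  [lra |].
destruct hadm as [[hr1 hc] | [[-> hc] | [hr1 hc]]].
- exact (xi_tractrix_system_gt1 r c1 c2 t hr1 hc).
- exact (xi_tractrix_system_eq1 c1 c2 t hc).
- exact (xi_tractrix_system_lt1 r c1 c2 t hr1 hc).
Qed.
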